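(* Let $\mu$ be the distribution constructed below. Then $\mu\in\mathcal{L}_{loc}$, i.e. for every $c>0$ and every $a\in\mathbb{R}$, $\mu((x,x+c])>0$ for all large $x$ and $\mu((x+a,x+a+c])\sim\mu((x,x+c])$.
   Context: $f(x)\sim g(x)$ means $\lim_{x\to\infty}f(x)/g(x)=1$. The class $\mathcal{L}_{loc}$ consists of distributions $\rho$ on $\mathbb{R}$ such that for every $c>0$, $\rho((x,x+c])>0$ for all sufficiently large $x$ and $\rho((x+a,x+a+c])\sim\rho((x,x+c])$ for every $a\in\mathbb{R}$. Construction: fix $1<x_0<b$ and $\delta\in(0,1)$ with $\delta<\min(x_0-1,\,b-x_0)$. Let $h$ be a continuous periodic function on $\mathbb{R}$ with period $\log b$ such that $h(\log x)>0$ for $x\in[1,x_0)\cup(x_0,b]$, $h(\log x_0)=0$, and $h(\log x)=-1/\log|x-x_0|$ for $0<|x-x_0|<\delta$. For $\alpha>0$ let $\phi(x):=x^{-\alpha-1}h(\log x)\mathbf{1}_{[1,\infty)}(x)$, $M:=\int_1^\infty x^{-1-\alpha}h(\log x)\,dx$, and $\mu(dx):=M^{-1}\phi(x)\,dx$. *)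

From Stdlib Require Import Reals Lra ClassicalEpsilon.
Open Scope R_scope.

(* Riemann integral of f over [a,b] (a <= b), defined as RiemannInt when f is
   Riemann integrable there, and 0 otherwise (the value does not depend on the
   integrability proof, by RiemannInt_P5). *)
Definition integral (f : R -> R) (a b : R) : R :=
  match excluded_middle_informative (inhabited (Riemann_integrable f a b)) with
  | left H =>
      let pr := proj1_sig (constructive_indefinite_description
                  (fun _ : Riemann_integrable f a b => True)
                  (match H with inhabits p => ex_intro _ p I end)) in
      RiemannInt pr
  | right _ => 0
  end.

Definition asym_equiv (f g : R -> R) : Prop :=
  forall eps, eps > 0 -> exists X, forall x, X <= x -> Rabs (f x / g x - 1) < eps.

(* A distribution rho on R is represented through its interval masses:
   m u v = rho((u, v]).  Class L_loc: *)
Definition L_loc (m : R -> R -> R) : Prop :=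
  forall c, c > 0 ->
    (exists X, forall x, X <= x -> m x (x + c) > 0) /\
    (forall a, asym_equiv (fun x => m (x + a) (x + a + c)) (fun x => m x (x + c))).

Definition phi (alpha : R) (h : R -> R) (x : R) : R :=
  if Rle_dec 1 x then Rpower x (- alpha - 1) * h (ln x) else 0.

Definition mu_interval (alpha M : R) (h : R -> R) (u v : R) : R :=
  / M * integral (phi alpha h) u v.

From Stdlib Require Import Reals Lra ZArith ClassicalEpsilon.
From Coquelicot Require Import Coquelicot.
Open Scope R_scope.

(* Write [g t = h (ln t)]: it is multiplicatively [b]-periodic and positive except at the
   points [x0 * b^n], near which [g t = 1 / (n ln b - ln |t - x0 * b^n|)].  Hence on every window
   [[x - L, x + L]] with [x] large, [g] is nearly constant up to a relative error [eta]: away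
   from the zeros because [ln] varies by [O(L / x)] on the window and [h] is uniformly continuous;
   near a zero because [n ln b] dominates [ln |t - x0 * b^n|], so that [g t ~ 1 / (n ln b)] outside
   a neighbourhood of the zero of arbitrarily small width.  The factor [t ^ (- alpha - 1)] is also
   nearly constant on the window, so any two intervals of length [c] in it have masses whose
   ratio tends to [1]. *)

Lemma integral_RInt (f : R -> R) a b : ex_RInt f a b -> integral f a b = RInt f a b.
Proof.
  intros Hf. unfold integral.
  destruct excluded_middle_informative as [? | Hn].
  - destruct constructive_indefinite_description as [pr ?]; simpl.
    symmetry; apply RInt_Reals.
  - exfalso; apply Hn; constructor; now apply ex_RInt_Reals_0.
Qed.

Lemma RInt_const_R (c a b : R) : RInt (fun _ => c) a b = c * (b - a).
Proof. rewrite RInt_const. unfold scal; simpl; unfold mult; simpl. ring. Qed.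

Lemma RInt_ge_const (f : R -> R) a b D : a <= b -> ex_RInt f a b ->
  (forall t, a < t < b -> D <= f t) -> D * (b - a) <= RInt f a b.
Proof.
  intros Hab Hf HD. rewrite <- RInt_const_R.
  apply RInt_le; auto. apply ex_RInt_const.
Qed.

Lemma RInt_le_const (f : R -> R) a b U : a <= b -> ex_RInt f a b ->
  (forall t, a < t < b -> f t <= U) -> RInt f a b <= U * (b - a).
Proof.
  intros Hab Hf HU. rewrite <- RInt_const_R.
  apply RInt_le; auto. apply ex_RInt_const.
Qed.

Lemma ex_RInt_sub (f : R -> R) u a b v : u <= a <= b -> b <= v -> ex_RInt f u v ->
  ex_RInt f a b.
Proof.
  intros Hab Hbv Hf.
  apply (ex_RInt_Chasles_2 (V := R_CompleteNormedModule)) with u; [lra|].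
  apply (ex_RInt_Chasles_1 (V := R_CompleteNormedModule)) with v; [lra | exact Hf].
Qed.

Lemma RInt_sub_interval_le (f : R -> R) a b c d : a <= b <= c -> c <= d -> ex_RInt f a d ->
  (forall t, a <= t <= d -> 0 <= f t) -> RInt f b c <= RInt f a d.
Proof.
  intros Hbc Hcd Hf Hpos.
  rewrite <- (RInt_Chasles f a b d), <- (RInt_Chasles f b c d)
    by (apply (ex_RInt_sub f a _ _ d); auto; lra).
  assert (0 * (b - a) <= RInt f a b)
    by (apply RInt_ge_const; [lra | apply (ex_RInt_sub f a _ _ d); auto; lra |
                              intros t Ht; apply Hpos; lra]).
  assert (0 * (d - c) <= RInt f c d)
    by (apply RInt_ge_const; [lra | apply (ex_RInt_sub f a _ _ d); auto; lra |
                              intros t Ht; apply Hpos; lra]).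
  unfold plus; simpl. lra.
Qed.

Lemma RInt_bounds_off_interval (f : R -> R) u v e th D U :
  u <= v -> 0 <= D -> 0 <= th -> ex_RInt f u v ->
  (forall t, u <= t <= v -> 0 <= f t <= U) ->
  (forall t, u <= t <= v -> th <= Rabs (t - e) -> D <= f t) ->
  D * (v - u - 2 * th) <= RInt f u v <= U * (v - u).
Proof.
  intros Huv HD Hth Hf Hb Hl.
  assert (Hsub : forall a b, u <= a <= b -> b <= v -> ex_RInt f a b)
    by (intros a b Hab Hbv; apply (ex_RInt_sub f u a b v); auto).
  split; [|apply RInt_le_const; auto; intros t Ht; apply Hb; lra].
  set (p := Rmax u (Rmin v (e - th))).
  set (q := Rmax p (Rmin v (e + th))).
  assert (Hp : u <= p <= v) by (unfold p, Rmax, Rmin; repeat destruct Rle_dec; lra).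
  assert (Hq : p <= q <= v) by (unfold q, Rmax, Rmin; repeat destruct Rle_dec; lra).
  assert (Hqp : q - p <= 2 * th) by (unfold q, p, Rmax, Rmin; repeat destruct Rle_dec; lra).
  rewrite <- (RInt_Chasles f u p v), <- (RInt_Chasles f p q v)
    by (apply Hsub; lra).
  assert (D * (p - u) <= RInt f u p).
  { apply RInt_ge_const; [lra | apply Hsub; lra |]. intros t Ht.
    assert (t <= e - th) by (unfold p, Rmax, Rmin in Ht; repeat destruct Rle_dec; lra).
    apply Hl; [lra|]. rewrite Rabs_left1; lra. }
  assert (0 * (q - p) <= RInt f p q).
  { apply RInt_ge_const; [lra | apply Hsub; lra |]. intros t Ht; apply Hb; lra. }
  assert (D * (v - q) <= RInt f q v).
  { apply RInt_ge_const; [lra | apply Hsub; lra |]. intros t Ht.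
    assert (e + th <= t) by (unfold q, p, Rmax, Rmin in Ht; repeat destruct Rle_dec; lra).
    apply Hl; [lra|]. rewrite Rabs_right; lra. }
  unfold plus; simpl. nra.
Qed.

Lemma ln_sub_le y z : 0 < y <= z -> ln z - ln y <= (z - y) / y.
Proof.
  intros Hyz. rewrite <- ln_div by lra.
  assert (Hq := exp_ineq1_le (ln (z / y))).
  rewrite exp_ln in Hq by (apply Rdiv_lt_0_compat; lra).
  replace ((z - y) / y) with (z / y - 1) by (field; lra). lra.
Qed.

Lemma Rabs_ln_sub_le m y z : 0 < m -> m <= y -> m <= z ->
  Rabs (ln z - ln y) <= Rabs (z - y) / m.
Proof.
  intros Hm Hy Hz. unfold Rdiv.
  destruct (Rle_dec y z) as [Hyz | Hzy].
  - assert (Hl := ln_sub_le y z ltac:(lra)). assert (Hl0 := ln_le y z ltac:(lra) Hyz).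
    rewrite !Rabs_right by lra.
    apply Rle_trans with ((z - y) / y); [exact Hl|].
    apply Rmult_le_compat_l; [lra|]. apply Rinv_le_contravar; lra.
  - assert (Hl := ln_sub_le z y ltac:(lra)). assert (Hl0 := ln_le z y ltac:(lra) ltac:(lra)).
    rewrite !Rabs_left1 by lra.
    apply Rle_trans with ((y - z) / z); [lra|].
    replace (- (z - y)) with (y - z) by ring.
    apply Rmult_le_compat_l; [lra|]. apply Rinv_le_contravar; lra.
Qed.

Lemma Rabs_ln_sub_window x t L : L < x -> Rabs (t - x) <= L ->
  Rabs (ln t - ln x) <= L / (x - L).
Proof.
  intros HLx Ht. assert (Ht' := Ht). apply Rabs_le_between' in Ht'.
  apply Rle_trans with (Rabs (t - x) / (x - L)); [apply Rabs_ln_sub_le; lra|].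
  unfold Rdiv. apply Rmult_le_compat_r; [|exact Ht].
  left; apply Rinv_0_lt_compat; lra.
Qed.

Lemma Rabs_sub_window x t z L : Rabs (t - x) <= L ->
  Rabs (x - z) - L <= Rabs (t - z) <= Rabs (x - z) + L.
Proof.
  intros Ht. replace (t - z) with ((x - z) + (t - x)) by ring.
  assert (Hq := Rabs_triang (x - z) (t - x)).
  assert (Hq' := Rabs_triang_inv (x - z) (- (t - x))).
  rewrite Rabs_Ropp in Hq'. replace (x - z - - (t - x)) with ((x - z) + (t - x)) in Hq' by ring.
  lra.
Qed.

Lemma Rabs_sub_scale x y B : 0 < B -> Rabs (x - y * B) = B * Rabs (x / B - y).
Proof.
  intros HB. replace (x - y * B) with (B * (x / B - y)) by (field; lra).
  rewrite Rabs_mult, Rabs_right by lra. reflexivity.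
Qed.

Lemma inv_sub_ln_le K s s2 : 0 < s <= s2 -> 0 < K - ln s2 ->
  / (K - ln s) <= / (K - ln s2).
Proof.
  intros Hs HK. apply Rinv_le_contravar; [exact HK|].
  assert (ln s <= ln s2) by (apply ln_le; lra). lra.
Qed.

Lemma inv_sub_ln_ge K s1 s s2 eta : 0 < s1 <= s -> s <= s2 -> 0 < K - ln s2 -> 0 <= eta ->
  ln s2 - ln s1 <= eta * (K - ln s2) -> (1 - eta) * / (K - ln s2) <= / (K - ln s).
Proof.
  intros Hs1 Hs2 HK He Hgap.
  assert (ln s1 <= ln s) by (apply ln_le; lra).
  assert (ln s <= ln s2) by (apply ln_le; lra).
  set (D := K - ln s) in *. set (D2 := K - ln s2) in *.
  assert (HD : D2 <= D) by (unfold D, D2; lra).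
  assert (HD1 : D <= (1 + eta) * D2) by (unfold D, D2 in *; lra).
  assert (D2 * / D2 = 1) by (field; lra).
  assert (D * / D = 1) by (field; lra).
  assert (0 < / D2) by (apply Rinv_0_lt_compat; lra).
  assert (0 < / D) by (apply Rinv_0_lt_compat; lra).
  nra.
Qed.

Lemma exp_near_0 y eta : 0 <= eta <= 1 -> Rabs y <= eta / 2 -> 1 - eta <= exp y <= 1 + eta.
Proof.
  intros He Hy. apply Rabs_le_between in Hy.
  assert (H1 := exp_ineq1_le y). assert (H2 := exp_ineq1_le (- y)).
  assert (Hinv : exp y * exp (- y) = 1) by (rewrite <- exp_plus, Rplus_opp_r; apply exp_0).
  assert (exp y > 0) by apply exp_pos.
  split; nra.
Qed.

Lemma Rpower_window s eta L : 0 < eta <= 1 -> 0 <= L ->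
  exists X, L < X /\ forall x t, X <= x -> Rabs (t - x) <= L ->
    Rpower x s * (1 - eta) <= Rpower t s <= Rpower x s * (1 + eta).
Proof.
  intros He HL.
  assert (Hq : 0 <= 2 * L * Rabs s / eta)
    by (apply Rmult_le_pos; [assert (Hs := Rabs_pos s); nra | left; apply Rinv_0_lt_compat; lra]).
  exists (L + 2 * L * Rabs s / eta + 1). split; [lra|].
  intros x t Hx Ht.
  assert (Hln := Rabs_ln_sub_window x t L ltac:(lra) Ht).
  assert (Hy : Rabs (s * (ln t - ln x)) <= eta / 2).
  { rewrite Rabs_mult. apply Rle_trans with (Rabs s * (L / (x - L))).
    { apply Rmult_le_compat_l; [apply Rabs_pos | exact Hln]. }
    assert (E1 : L / (x - L) * (x - L) = L) by (field; lra).
    assert (E2 : 2 * L * Rabs s / eta * eta = 2 * L * Rabs s) by (field; lra).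
    assert (0 <= L / (x - L)) by (apply Rmult_le_pos; [lra | left; apply Rinv_0_lt_compat; lra]).
    assert (Hs := Rabs_pos s). nra. }
  assert (E : Rpower t s = Rpower x s * exp (s * (ln t - ln x))).
  { unfold Rpower. rewrite <- exp_plus. f_equal. ring. }
  rewrite E. assert (Hx0 : 0 < Rpower x s) by apply exp_pos.
  assert (Hexp := exp_near_0 _ eta ltac:(lra) Hy).
  split; apply Rmult_le_compat_l; lra.
Qed.

Lemma ratio_near_1 Q k I1 I2 : 0 < Q -> 0 < k <= 1 / 2 ->
  Q * (1 - k) <= I1 <= Q * (1 + k) -> Q * (1 - k) <= I2 <= Q * (1 + k) ->
  Rabs (I2 / I1 - 1) <= 4 * k.
Proof.
  intros HQ Hk H1 H2.
  assert (HI1 : Q / 2 <= I1) by nra.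
  replace (I2 / I1 - 1) with ((I2 - I1) / I1) by (field; lra).
  rewrite Rabs_div, (Rabs_right I1) by lra.
  assert (Hn : Rabs (I2 - I1) <= 2 * k * Q) by (apply Rabs_le_between; nra).
  apply Rmult_le_reg_r with I1; [lra|].
  unfold Rdiv. rewrite Rmult_assoc, Rinv_l, Rmult_1_r by lra. nra.
Qed.

Lemma periodic_Z (f : R -> R) p : (forall t, f (t + p) = f t) ->
  forall (n : Z) t, f (t + IZR n * p) = f t.
Proof.
  intros Hper.
  assert (HN : forall k t, f (t + INR k * p) = f t).
  { induction k as [|k IH]; intros t.
    - simpl. f_equal; ring.
    - rewrite S_INR. replace (t + (INR k + 1) * p) with ((t + INR k * p) + p) by ring.
      rewrite Hper. apply IH. }
  intros [|q|q] t.
  - simpl. f_equal; ring.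
  - rewrite <- positive_nat_Z, <- INR_IZR_INZ. apply HN.
  - rewrite <- Pos2Z.opp_pos, opp_IZR, <- positive_nat_Z, <- INR_IZR_INZ.
    rewrite <- (HN (Pos.to_nat q) (t + - INR (Pos.to_nat q) * p)). f_equal; ring.
Qed.

Lemma shift_into_period p t : 0 < p -> exists n : Z, 0 <= t - IZR n * p <= p.
Proof.
  intros Hp. destruct (archimed (t / p)) as [H1 H2].
  exists (up (t / p) - 1)%Z. rewrite minus_IZR.
  set (q := t / p) in *.
  assert (E : t = q * p) by (unfold q; field; lra).
  rewrite E. split; nra.
Qed.

Lemma scale_into_period b x : 1 < b -> 0 < x -> exists n : Z, 1 <= x / Rpower b (IZR n) <= b.
Proof.
  intros Hb Hx. assert (Hlb : 0 < ln b) by (rewrite <- ln_1; apply ln_increasing; lra).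
  destruct (shift_into_period (ln b) (ln x) Hlb) as [n Hn]. exists n.
  assert (E : ln (x / Rpower b (IZR n)) = ln x - IZR n * ln b)
    by (rewrite ln_div, ln_Rpower by (auto; apply exp_pos); ring).
  assert (Hy : 0 < x / Rpower b (IZR n)) by (apply Rdiv_lt_0_compat; [lra | apply exp_pos]).
  split; apply Rnot_lt_le; intros Hc.
  - apply ln_increasing in Hc; [rewrite ln_1, E in Hc; lra | exact Hy].
  - apply ln_increasing in Hc; [rewrite E in Hc; lra | lra].
Qed.

Lemma periodic_uniform_continuity (f : R -> R) p : 0 < p -> continuity f ->
  (forall t, f (t + p) = f t) ->
  forall eps, 0 < eps -> exists d, 0 < d /\
    forall t t', Rabs (t - t') < d -> Rabs (f t - f t') < eps.
Proof.
  intros Hp Hf Hper eps He.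
  destruct (Heine f (fun c => - p <= c <= 2 * p) (compact_P3 _ _) (fun x _ => Hf x)
              (mkposreal _ He)) as [d Hd].
  exists (Rmin d p). split; [apply Rmin_pos; [apply cond_pos | lra]|].
  intros t t' Htt. destruct (shift_into_period p t Hp) as [n Hn].
  replace t with ((t - IZR n * p) + IZR n * p) by ring.
  replace t' with ((t' - IZR n * p) + IZR n * p) by ring.
  rewrite !(periodic_Z f p Hper).
  assert (Hs := Rmin_l d p). assert (Hs' := Rmin_r d p).
  apply Rabs_lt_between' in Htt.
  apply Hd; simpl; try lra. apply Rabs_lt_between'; lra.
Qed.

(* The exceptional point [e] accommodates the zeros [x0 * b^n] of [t |-> h (ln t)]. *)
Definition nearly_flat (f : R -> R) (A e x L th eta : R) : Prop :=
  forall t, Rabs (t - x) <= L ->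
    0 <= f t <= A * (1 + eta) /\ (th <= Rabs (t - e) -> A * (1 - eta) <= f t).

Lemma nearly_flat_mul (f p F : R -> R) A e x L th eta P :
  0 < P -> 0 <= eta <= 1 -> nearly_flat f A e x L th eta ->
  (forall t, Rabs (t - x) <= L -> P * (1 - eta) <= p t <= P * (1 + eta) /\ F t = p t * f t) ->
  nearly_flat F (P * A) e x L th (3 * eta).
Proof.
  intros HP He Hf Hp t Ht.
  destruct (Hf t Ht) as [[Hf0 Hf1] Hf2]. destruct (Hp t Ht) as [[Hp0 Hp1] ->].
  assert (HA : 0 <= A) by nra.
  assert (HPA : 0 <= P * A) by nra.
  assert (0 <= P * (1 - eta)) by nra.
  split; [split|].
  - apply Rmult_le_pos; lra.
  - apply Rle_trans with (P * (1 + eta) * (A * (1 + eta))); [apply Rmult_le_compat; lra|].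
    replace (P * (1 + eta) * (A * (1 + eta))) with (P * A * (1 + eta) ^ 2) by ring.
    apply Rmult_le_compat_l; [exact HPA | nra].
  - intros Hte. specialize (Hf2 Hte).
    apply Rle_trans with (P * (1 - eta) * (A * (1 - eta))); [|apply Rmult_le_compat; nra].
    replace (P * (1 - eta) * (A * (1 - eta))) with (P * A * (1 - eta) ^ 2) by ring.
    apply Rmult_le_compat_l; [exact HPA | nra].
Qed.

Lemma RInt_nearly_flat (f : R -> R) A e x L th eta u v :
  0 < A -> 0 <= eta <= 1 -> 0 <= th -> nearly_flat f A e x L th eta ->
  u <= v -> ex_RInt f u v -> (forall t, u <= t <= v -> Rabs (t - x) <= L) ->
  A * (1 - eta) * (v - u - 2 * th) <= RInt f u v <= A * (1 + eta) * (v - u).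
Proof.
  intros HA He Hth Hf Huv Hint Hwin.
  apply RInt_bounds_off_interval with e; auto; [nra | |].
  - intros t Ht. apply (Hf t (Hwin t Ht)).
  - intros t Ht. apply (Hf t (Hwin t Ht)).
Qed.

Local Set Implicit Arguments.
Record log_periodic_profile (x0 b delta : R) (h : R -> R) : Prop := {
  delta_pos : 0 < delta;
  delta_lt_1 : delta < 1;
  delta_lt_x0 : delta < x0 - 1;
  delta_lt_b : delta < b - x0;
  profile_continuous : continuity h;
  profile_periodic : forall t, h (t + ln b) = h t;
  profile_pos : forall x, 1 <= x <= b -> x <> x0 -> h (ln x) > 0;
  profile_zero : h (ln x0) = 0;
  profile_log_zero : forall x, 0 < Rabs (x - x0) < delta -> h (ln x) = - / ln (Rabs (x - x0)) }.
Local Unset Implicit Arguments.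

Section LogPeriodicProfile.

Variables (x0 b delta : R) (h : R -> R).
Hypothesis Hh : log_periodic_profile x0 b delta h.

Let Hdelta : 0 < delta < 1 := conj (delta_pos Hh) (delta_lt_1 Hh).
Let Hdelta_x0 : delta < x0 - 1 := delta_lt_x0 Hh.
Let Hdelta_b : delta < b - x0 := delta_lt_b Hh.

Local Notation bpow n := (Rpower b (IZR n)).

Lemma ln_b_pos : 0 < ln b.
Proof. rewrite <- ln_1. apply ln_increasing; lra. Qed.

Lemma profile_scale n t : 0 < t -> h (ln (t * bpow n)) = h (ln t).
Proof.
  intros Ht. rewrite ln_mult, ln_Rpower by (auto; apply exp_pos).
  apply (periodic_Z h (ln b) (profile_periodic Hh)).
Qed.

Lemma profile_reduce x : 0 < x ->
  exists n : Z, 1 <= x / bpow n <= b /\ h (ln x) = h (ln (x / bpow n)).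
Proof.
  intros Hx. destruct (scale_into_period b x ltac:(lra) Hx) as [n Hn].
  exists n. split; [exact Hn|].
  assert (HB : 0 < bpow n) by apply exp_pos.
  rewrite <- (profile_scale n (x / bpow n)) by (apply Rdiv_lt_0_compat; lra).
  f_equal. f_equal. field. lra.
Qed.

Lemma profile_nonneg t : 0 <= h t.
Proof.
  rewrite <- (ln_exp t). destruct (profile_reduce (exp t) (exp_pos t)) as [n [Hy ->]].
  destruct (Req_dec (exp t / bpow n) x0) as [-> | Hne].
  - rewrite (profile_zero Hh). lra.
  - left. apply (profile_pos Hh); auto.
Qed.

Lemma profile_log_continuous y : 0 < y -> continuous (fun t => h (ln t)) y.
Proof.
  intros Hy. apply (continuous_comp ln h); [apply continuous_ln; lra|].
  apply continuity_pt_filterlim, (profile_continuous Hh).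
Qed.

Lemma profile_dichotomy : exists m, 0 < m /\ forall x, 0 < x ->
  m <= h (ln x) \/ exists n : Z, Rabs (x / bpow n - x0) < delta / 2.
Proof.
  assert (Hc : forall y, 0 < y -> continuity_pt (fun y => h (ln y)) y)
    by (intros y Hy; apply continuity_pt_filterlim, profile_log_continuous, Hy).
  destruct (continuity_ab_min (fun y => h (ln y)) 1 (x0 - delta / 2)) as [y1 [Hy1 Hr1]].
  { lra. } { intros y Hy. apply Hc. lra. }
  destruct (continuity_ab_min (fun y => h (ln y)) (x0 + delta / 2) b) as [y2 [Hy2 Hr2]].
  { lra. } { intros y Hy. apply Hc. lra. }
  assert (P1 : h (ln y1) > 0) by (apply (profile_pos Hh); lra).
  assert (P2 : h (ln y2) > 0) by (apply (profile_pos Hh); lra).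
  exists (Rmin (h (ln y1)) (h (ln y2))). split; [apply Rmin_pos; lra|].
  intros x Hx. destruct (profile_reduce x Hx) as [n [Hy ->]].
  set (y := x / bpow n) in *.
  destruct (Rlt_dec (Rabs (y - x0)) (delta / 2)) as [Hnear | Hfar].
  - right. exists n. exact Hnear.
  - left. assert (Hm1 := Rmin_l (h (ln y1)) (h (ln y2))).
    assert (Hm2 := Rmin_r (h (ln y1)) (h (ln y2))).
    destruct (Rle_dec y x0).
    + rewrite Rabs_left1 in Hfar by lra. specialize (Hy1 y ltac:(lra)). simpl in Hy1. lra.
    + rewrite Rabs_right in Hfar by lra. specialize (Hy2 y ltac:(lra)). simpl in Hy2. lra.
Qed.

Lemma profile_near_zero n t : 0 < t -> Rabs (t / bpow n - x0) < delta ->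
  t <> x0 * bpow n ->
  h (ln t) = / (ln (bpow n) - ln (Rabs (t - x0 * bpow n))).
Proof.
  intros Ht Hd Hne. set (B := bpow n) in *.
  assert (HB : 0 < B) by apply exp_pos.
  assert (Hu : 0 < Rabs (t / B - x0)).
  { apply Rabs_pos_lt. intros Hz. apply Hne.
    replace t with ((t / B - x0) * B + x0 * B) by (field; lra). rewrite Hz. ring. }
  replace t with (t / B * B) at 1 by (field; lra).
  unfold B at 2. rewrite profile_scale by (apply Rdiv_lt_0_compat; lra).
  rewrite (profile_log_zero Hh), Rabs_sub_scale, ln_mult by lra.
  rewrite <- Rinv_opp. f_equal. ring.
Qed.

Lemma nearly_flat_off_zeros m eta L : 0 < m -> 0 < eta -> 0 <= L ->
  exists X, forall x, X <= x -> m <= h (ln x) ->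
    forall e th, nearly_flat (fun t => h (ln t)) (h (ln x)) e x L th eta.
Proof.
  intros Hm He HL.
  destruct (periodic_uniform_continuity h (ln b) ln_b_pos (profile_continuous Hh)
              (profile_periodic Hh) (m * eta) ltac:(nra)) as [d [Hd Hu]].
  assert (HLd : 0 <= L / d) by (apply Rmult_le_pos; [lra | left; apply Rinv_0_lt_compat; lra]).
  exists (L + L / d + 1). intros x Hx Hmx e th t Ht.
  assert (Hln := Rabs_ln_sub_window x t L ltac:(lra) Ht).
  assert (Hclose : Rabs (ln t - ln x) < d).
  { apply Rle_lt_trans with (L / (x - L)); [exact Hln|].
    apply Rmult_lt_reg_r with (x - L); [lra|].
    assert (L / (x - L) * (x - L) = L) by (field; lra).
    assert (L / d * d = L) by (field; lra). nra. }
  specialize (Hu _ _ Hclose). apply Rabs_lt_between' in Hu.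
  assert (Hnn := profile_nonneg (ln t)).
  split; [split|]; intros; nra.
Qed.

Lemma nearly_flat_log_zero n x L th eta s1 s2 :
  0 < s1 -> 0 <= eta -> 0 < ln (bpow n) - ln s2 ->
  ln s2 - ln s1 <= eta * (ln (bpow n) - ln s2) ->
  (forall t, Rabs (t - x) <= L ->
     Rabs (t / bpow n - x0) < delta /\ Rabs (t - x0 * bpow n) <= s2 /\
     (th <= Rabs (t - x0 * bpow n) -> s1 <= Rabs (t - x0 * bpow n))) ->
  exists A e, 0 < A /\ nearly_flat (fun t => h (ln t)) A e x L th eta.
Proof.
  intros Hs1 He HK Hgap Hwin.
  exists (/ (ln (bpow n) - ln s2)), (x0 * bpow n).
  split; [apply Rinv_0_lt_compat; lra|].
  intros t Ht. destruct (Hwin t Ht) as [Hd [Hs2 Hs12]].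
  set (B := bpow n) in *.
  assert (HB : 0 < B) by apply exp_pos.
  assert (HA : 0 < / (ln B - ln s2)) by (apply Rinv_0_lt_compat; lra).
  assert (Ht0 : 0 < t).
  { apply Rabs_lt_between' in Hd. replace t with (t / B * B) by (field; lra).
    apply Rmult_lt_0_compat; lra. }
  destruct (Req_dec t (x0 * B)) as [Ez | Hne].
  - assert (Hz : h (ln (x0 * B)) = 0)
      by (unfold B; rewrite profile_scale by lra; apply (profile_zero Hh)).
    rewrite Ez, Rminus_diag, Rabs_R0, Hz in *.
    split; [split; nra|]. intros Hth. specialize (Hs12 Hth). lra.
  - rewrite (profile_near_zero n t Ht0 Hd Hne). fold B.
    assert (Hs : 0 < Rabs (t - x0 * B)) by (apply Rabs_pos_lt; lra).
    assert (Hle := inv_sub_ln_le (ln B) _ s2 (conj Hs Hs2) HK).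
    assert (0 < / (ln B - ln (Rabs (t - x0 * B)))).
    { apply Rinv_0_lt_compat. assert (ln (Rabs (t - x0 * B)) <= ln s2) by (apply ln_le; lra). lra. }
    split; [split; nra|]. intros Hth. rewrite Rmult_comm.
    apply inv_sub_ln_ge with s1; auto.
Qed.

Lemma log_zone_window n x L t :
  Rabs (x / bpow n - x0) < delta / 2 -> L < delta * bpow n / 2 ->
  Rabs (t - x) <= L -> Rabs (t / bpow n - x0) < delta.
Proof.
  intros Hx HL Ht. set (B := bpow n) in *.
  assert (HB : 0 < B) by apply exp_pos.
  replace (t / B - x0) with ((x / B - x0) + (t - x) / B) by (field; lra).
  apply Rle_lt_trans with (Rabs (x / B - x0) + Rabs ((t - x) / B)); [apply Rabs_triang|].
  rewrite Rabs_div, (Rabs_right B) by lra.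
  assert (Rabs (t - x) / B < delta / 2).
  { apply Rmult_lt_reg_r with B; [lra|]. unfold Rdiv. rewrite Rmult_assoc, Rinv_l by lra. lra. }
  lra.
Qed.

Lemma nearly_flat_close_to_zero n x L th eta R : 0 < eta -> 0 < th <= R + L ->
  Rabs (x / bpow n - x0) < delta / 2 -> L < delta * bpow n / 2 ->
  Rabs (x - x0 * bpow n) <= R ->
  ln (R + L) + (ln (R + L) - ln th) / eta < ln (bpow n) ->
  exists A e, 0 < A /\ nearly_flat (fun t => h (ln t)) A e x L th eta.
Proof.
  intros He Hth Hx HL HR HK.
  assert (Hgap : 0 <= (ln (R + L) - ln th) / eta).
  { apply Rmult_le_pos; [| left; apply Rinv_0_lt_compat; lra].
    assert (ln th <= ln (R + L)) by (apply ln_le; lra). lra. }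
  apply (nearly_flat_log_zero n x L th eta th (R + L)); [lra | lra | lra | |].
  - replace (ln (R + L) - ln th) with (eta * ((ln (R + L) - ln th) / eta)) at 1 by (field; lra).
    apply Rmult_le_compat_l; lra.
  - intros t Ht. assert (Htz := Rabs_sub_window x t (x0 * bpow n) L Ht).
    repeat split; [apply (log_zone_window n x L t); auto | lra | auto].
Qed.

(* Far from the zero [x0 * b^n] compared with the window size, [ln |t - x0 * b^n|]
   barely moves, while [ln b^n - ln |t - x0 * b^n| >= - ln delta] stays bounded below. *)
Lemma nearly_flat_away_from_zero n x L th eta : 0 < eta -> 0 < L ->
  Rabs (x / bpow n - x0) < delta / 2 -> L < delta * bpow n / 2 ->
  L + 2 * L / (eta * - ln delta) < Rabs (x - x0 * bpow n) ->
  exists A e, 0 < A /\ nearly_flat (fun t => h (ln t)) A e x L th eta.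
Proof.
  intros He HL Hx HLB Hfar.
  assert (HB : 0 < bpow n) by apply exp_pos.
  assert (Hlam : 0 < - ln delta).
  { assert (ln delta < ln 1) by (apply ln_increasing; lra). rewrite ln_1 in *. lra. }
  assert (HR : 0 < 2 * L / (eta * - ln delta)) by (apply Rdiv_lt_0_compat; nra).
  assert (Hxz : Rabs (x - x0 * bpow n) < delta * bpow n / 2) by (rewrite Rabs_sub_scale; nra).
  set (d := Rabs (x - x0 * bpow n)) in *.
  assert (Hlog : ln (d + L) < ln delta + ln (bpow n)).
  { rewrite <- ln_mult by lra. apply ln_increasing; lra. }
  assert (Hratio : 2 * L / (d - L) <= eta * - ln delta).
  { apply Rmult_le_reg_r with (d - L); [lra|].
    unfold Rdiv. rewrite Rmult_assoc, Rinv_l by lra.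
    assert (2 * L / (eta * - ln delta) * (eta * - ln delta) = 2 * L) by (field; nra).
    nra. }
  apply (nearly_flat_log_zero n x L th eta (d - L) (d + L)); [lra | lra | lra | |].
  - apply Rle_trans with (2 * L / (d - L)).
    + replace (2 * L) with (d + L - (d - L)) by ring. apply ln_sub_le; lra.
    + apply Rle_trans with (eta * - ln delta); [exact Hratio|].
      apply Rmult_le_compat_l; lra.
  - intros t Ht. assert (Htz := Rabs_sub_window x t (x0 * bpow n) L Ht). fold d in Htz.
    repeat split; [apply (log_zone_window n x L t); auto | lra | intros; lra].
Qed.

Lemma nearly_flat_near_zeros eta L th : 0 < eta -> 0 < L -> 0 < th <= 1 ->
  exists X, forall x n, X <= x -> Rabs (x / bpow n - x0) < delta / 2 ->
    exists A e, 0 < A /\ nearly_flat (fun t => h (ln t)) A e x L th eta.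
Proof.
  intros He HL Hth.
  set (R := L + 2 * L / (eta * - ln delta)).
  set (K0 := ln (R + 1 + L) + (ln (R + 1 + L) - ln th) / eta).
  assert (HL2 : 0 < 2 * L / delta) by (apply Rdiv_lt_0_compat; lra).
  assert (HeK0 := exp_pos K0).
  exists (b * (2 * L / delta + exp K0)). intros x n Hx Hn.
  assert (HB : 0 < bpow n) by apply exp_pos.
  assert (HxB : x < b * bpow n).
  { apply Rabs_lt_between' in Hn. destruct Hn as [_ Hn].
    apply Rmult_lt_reg_r with (/ bpow n); [apply Rinv_0_lt_compat; lra|].
    replace (b * bpow n * / bpow n) with b by (field; lra). unfold Rdiv in Hn. lra. }
  assert (HBx : 2 * L / delta + exp K0 < bpow n) by (apply Rmult_lt_reg_l with b; lra).
  assert (HLB : L < delta * bpow n / 2).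
  { assert (2 * L / delta * delta = 2 * L) by (field; lra). nra. }
  destruct (Rle_dec (Rabs (x - x0 * bpow n)) R) as [Hclose | Hfar].
  - apply (nearly_flat_close_to_zero n x L th eta (R + 1)); auto; [|lra|].
    + assert (0 <= 2 * L / (eta * - ln delta)).
      { apply Rmult_le_pos; [lra | left; apply Rinv_0_lt_compat].
        assert (ln delta < ln 1) by (apply ln_increasing; lra). rewrite ln_1 in *. nra. }
      unfold R. lra.
    + change (K0 < ln (bpow n)). rewrite <- (ln_exp K0). apply ln_increasing; lra.
  - apply (nearly_flat_away_from_zero n x L th eta); auto. unfold R in Hfar. lra.
Qed.

Lemma profile_eventually_nearly_flat eta L th : 0 < eta -> 0 < L -> 0 < th <= 1 ->
  exists X, forall x, X <= x ->
    exists A e, 0 < A /\ nearly_flat (fun t => h (ln t)) A e x L th eta.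
Proof.
  intros He HL Hth.
  destruct profile_dichotomy as [m [Hm Hdich]].
  destruct (nearly_flat_off_zeros m eta L Hm He ltac:(lra)) as [X1 HX1].
  destruct (nearly_flat_near_zeros eta L th He HL Hth) as [X2 HX2].
  exists (Rmax 1 (Rmax X1 X2)). intros x Hx.
  assert (H1 := Rmax_l 1 (Rmax X1 X2)). assert (H2 := Rmax_r 1 (Rmax X1 X2)).
  assert (H3 := Rmax_l X1 X2). assert (H4 := Rmax_r X1 X2).
  destruct (Hdich x ltac:(lra)) as [Hoff | [n Hn]].
  - exists (h (ln x)), 0. split; [lra|]. apply HX1; lra.
  - apply (HX2 x n); [lra | exact Hn].
Qed.

Variable alpha : R.

Lemma phi_eq t : 1 <= t -> phi alpha h t = Rpower t (- alpha - 1) * h (ln t).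
Proof. intros Ht. unfold phi. destruct (Rle_dec 1 t); [reflexivity | lra]. Qed.

Lemma phi_nonneg t : 0 <= phi alpha h t.
Proof.
  unfold phi. destruct (Rle_dec 1 t); [|lra].
  apply Rmult_le_pos; [left; apply exp_pos | apply profile_nonneg].
Qed.

Lemma phi_ex_RInt u v : 1 <= u <= v -> ex_RInt (phi alpha h) u v.
Proof.
  intros Huv.
  apply (ex_RInt_ext (fun t => Rpower t (- alpha - 1) * h (ln t))).
  { intros t Ht. rewrite Rmin_left, Rmax_right in Ht by lra. symmetry; apply phi_eq; lra. }
  apply (ex_RInt_continuous (V := R_CompleteNormedModule)). intros t Ht.
  rewrite Rmin_left, Rmax_right in Ht by lra.
  apply (continuous_mult (K := R_AbsRing)).
  - apply continuous_exp_comp, (continuous_mult (K := R_AbsRing) (fun _ => - alpha - 1) ln).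
    + apply continuous_const.
    + apply continuous_ln; lra.
  - apply profile_log_continuous. lra.
Qed.

Lemma phi_eventually_nearly_flat eta L th : 0 < eta <= 1 -> 0 < L -> 0 < th <= 1 ->
  exists X, forall x, X <= x ->
    exists A e, 0 < A /\ nearly_flat (phi alpha h) A e x L th (3 * eta).
Proof.
  intros He HL Hth.
  destruct (profile_eventually_nearly_flat eta L th ltac:(lra) HL Hth) as [X1 HX1].
  destruct (Rpower_window (- alpha - 1) eta L He ltac:(lra)) as [X2 [HX2L HX2]].
  exists (Rmax (Rmax X1 X2) (L + 1)). intros x Hx.
  assert (H1 := Rmax_l X1 X2). assert (H2 := Rmax_r X1 X2).
  assert (H3 := Rmax_l (Rmax X1 X2) (L + 1)). assert (H4 := Rmax_r (Rmax X1 X2) (L + 1)).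
  destruct (HX1 x ltac:(lra)) as [A [e [HA Hf]]].
  assert (HP : 0 < Rpower x (- alpha - 1)) by apply exp_pos.
  exists (Rpower x (- alpha - 1) * A), e. split; [apply Rmult_lt_0_compat; lra|].
  apply nearly_flat_mul with (fun t => h (ln t)) (fun t => Rpower t (- alpha - 1));
    [exact HP | lra | exact Hf |].
  intros t Ht. split; [apply HX2; lra|].
  apply phi_eq. apply Rabs_le_between' in Ht. lra.
Qed.

Lemma phi_window_integrals c a eta : 0 < c -> 0 < eta <= 1 / 8 ->
  exists X, forall x, X <= x -> exists Q, 0 < Q /\
    Q * (1 - 4 * eta) <= integral (phi alpha h) x (x + c) <= Q * (1 + 4 * eta) /\
    Q * (1 - 4 * eta) <= integral (phi alpha h) (x + a) (x + a + c) <= Q * (1 + 4 * eta).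
Proof.
  intros Hc He.
  assert (Ha := Rle_abs a). assert (Ha' := Rle_abs (- a)). rewrite Rabs_Ropp in Ha'.
  set (L := Rabs a + c).
  set (th := Rmin (c * eta / 2) 1).
  assert (Hth : 0 < th <= 1) by (unfold th, Rmin; destruct Rle_dec; nra).
  assert (Hthc : th <= c * eta / 2) by apply Rmin_l.
  destruct (phi_eventually_nearly_flat eta L th ltac:(lra) ltac:(unfold L; lra) Hth) as [X HX].
  exists (Rmax X (L + 1)). intros x Hx.
  assert (H1 := Rmax_l X (L + 1)). assert (H2 := Rmax_r X (L + 1)).
  destruct (HX x ltac:(lra)) as [A [e [HA Hf]]].
  exists (A * c). split; [nra|].
  assert (Hwin : forall u, x - L <= u -> u + c <= x + L ->
    A * c * (1 - 4 * eta) <= integral (phi alpha h) u (u + c) <= A * c * (1 + 4 * eta)).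
  { intros u Hu1 Hu2. rewrite integral_RInt by (apply phi_ex_RInt; lra).
    destruct (RInt_nearly_flat (phi alpha h) A e x L th (3 * eta) u (u + c))
      as [I1 I2]; auto; try lra.
    { apply phi_ex_RInt; lra. }
    { intros t Ht. apply Rabs_le_between'. lra. }
    split; [|nra].
    apply Rle_trans with (A * (1 - 3 * eta) * (u + c - u - 2 * th)); [|exact I1].
    replace (u + c - u - 2 * th) with (c - 2 * th) by ring.
    assert (0 <= A * (1 - 3 * eta)) by nra. nra. }
  split; apply Hwin; unfold L; lra.
Qed.

Lemma phi_mass_pos M :
  (forall eps, eps > 0 -> exists T0, forall T, T0 <= T ->
     Rabs (integral (phi alpha h) 1 T - M) < eps) ->
  0 < M.
Proof.
  intros HM.
  destruct (phi_window_integrals 1 0 (1 / 8) ltac:(lra) ltac:(lra)) as [X HX].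
  set (x := Rmax X 1).
  assert (Hx1 : 1 <= x) by apply Rmax_r.
  destruct (HX x (Rmax_l X 1)) as [Q [HQ [[I0 _] _]]].
  set (I := integral (phi alpha h) x (x + 1)) in *.
  assert (HI : 0 < I) by lra.
  destruct (HM (I / 2) ltac:(lra)) as [T0 HT0].
  set (T := Rmax T0 (x + 1)).
  assert (HT : x + 1 <= T) by apply Rmax_r.
  specialize (HT0 T (Rmax_l _ _)). apply Rabs_lt_between' in HT0.
  assert (I <= integral (phi alpha h) 1 T).
  { unfold I. rewrite !integral_RInt by (apply phi_ex_RInt; lra).
    apply RInt_sub_interval_le; [lra | lra | apply phi_ex_RInt; lra |].
    intros t _. apply phi_nonneg. }
  lra.
Qed.

End LogPeriodicProfile.

Theorem lemma3p1
  (x0 b delta alpha M : R) (h : R -> R)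
  (Hx0 : 1 < x0) (Hb : x0 < b)
  (Hdelta0 : 0 < delta) (Hdelta1 : delta < 1)
  (Hdelta2 : delta < x0 - 1) (Hdelta3 : delta < b - x0)
  (Hcont : continuity h)
  (Hper : forall t, h (t + ln b) = h t)
  (Hpos : forall x, 1 <= x <= b -> x <> x0 -> h (ln x) > 0)
  (Hzero : h (ln x0) = 0)
  (Hloc : forall x, 0 < Rabs (x - x0) < delta -> h (ln x) = - / ln (Rabs (x - x0)))
  (Halpha : alpha > 0)
  (HM : forall eps, eps > 0 -> exists T0, forall T, T0 <= T ->
          Rabs (integral (phi alpha h) 1 T - M) < eps) :
  L_loc (mu_interval alpha M h).
Proof.
  assert (Hh : log_periodic_profile x0 b delta h) by (constructor; assumption).
  assert (HM0 := phi_mass_pos x0 b delta h Hh alpha M HM).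
  intros c Hc. split.
  - destruct (phi_window_integrals x0 b delta h Hh alpha c 0 (1 / 8) Hc ltac:(lra)) as [X HX].
    exists X. intros x Hx. destruct (HX x Hx) as [Q [HQ [[I _] _]]].
    unfold mu_interval. apply Rmult_lt_0_compat; [apply Rinv_0_lt_compat |]; lra.
  - intros a eps Heps.
    set (eta := Rmin (1 / 8) (eps / 32)).
    assert (Heta : 0 < eta <= 1 / 8) by (unfold eta, Rmin; destruct Rle_dec; lra).
    assert (Heps_eta : eta <= eps / 32) by apply Rmin_r.
    destruct (phi_window_integrals x0 b delta h Hh alpha c a eta Hc Heta) as [X HX].
    exists X. intros x Hx. destruct (HX x Hx) as [Q [HQ [I1 I2]]].
    assert (Hr := ratio_near_1 Q (4 * eta) _ _ HQ ltac:(lra) I1 I2).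
    unfold mu_interval.
    replace (/ M * integral (phi alpha h) (x + a) (x + a + c) /
             (/ M * integral (phi alpha h) x (x + c)))
      with (integral (phi alpha h) (x + a) (x + a + c) / integral (phi alpha h) x (x + c))
      by (field; split; nra).
    lra.
Qed.
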